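(* There exists $\delta_0>0$ such that for every $0<\delta<\delta_0$ the following holds. If $\gamma:[0,n]\to\mathbb{H}^3$ is a $(1+\delta,\delta)$-quasigeodesic and $\bar\gamma$ is the geodesic segment with endpoints $\gamma(0)$ and $\gamma(n)$, then $\gamma([0,n])$ is contained in the $\eta$-neighborhood of $\bar\gamma$, where $\eta=5\delta^{1/5}$.
   Context: A $(1+\delta,\delta)$-quasigeodesic is a continuous map $\gamma:[0,n]\to\mathbb{H}^3$ with $\frac{|s-t|}{1+\delta}-\delta\le d_{\mathbb{H}^3}(\gamma(s),\gamma(t))\le(1+\delta)|s-t|+\delta$ for all $s,t\in[0,n]$. *)

(* hyperbolic 3-space via the hyperboloid model in R^{3,1}. *)
From Stdlib Require Import Reals.
Open Scope R_scope.

Definition R4 : Type := (R * R * R * R)%type.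

Definition mink (x y : R4) : R :=
  match x, y with
  | (x0, x1, x2, x3), (y0, y1, y2, y3) =>
      - (x0 * y0) + x1 * y1 + x2 * y2 + x3 * y3
  end.

Definition inH3 (x : R4) : Prop :=
  mink x x = -1 /\ 0 < fst (fst (fst x)).

Definition arcosh (t : R) : R := ln (t + sqrt (t * t - 1)).

Definition dH (x y : R4) : R := arcosh (- mink x y).

Definition continuous_on_H3 (gamma : R -> R4) (a b : R) : Prop :=
  forall s, a <= s <= b -> forall eps, 0 < eps ->
    exists del, 0 < del /\
      forall t, a <= t <= b -> Rabs (t - s) < del -> dH (gamma s) (gamma t) < eps.

Definition quasigeodesic (delta n : R) (gamma : R -> R4) : Prop :=
  (forall t, 0 <= t <= n -> inH3 (gamma t)) /\
  continuous_on_H3 gamma 0 n /\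
  forall s t, 0 <= s <= n -> 0 <= t <= n ->
    Rabs (s - t) / (1 + delta) - delta <= dH (gamma s) (gamma t) /\
    dH (gamma s) (gamma t) <= (1 + delta) * Rabs (s - t) + delta.

Definition geodesic_segment (p q : R4) (c : R -> R4) : Prop :=
  (forall t, 0 <= t <= dH p q -> inH3 (c t)) /\
  c 0 = p /\ c (dH p q) = q /\
  forall s t, 0 <= s <= dH p q -> 0 <= t <= dH p q ->
    dH (c s) (c t) = Rabs (s - t).

(* We work in the hyperboloid model, where cosh d(x,y) = -<x,y>.  For a unit
   spacelike vector w, the height <x,w> of a point x above the totally geodesic
   plane w^perp is a linear function of x; the proof rests on two facts.

   1. Maximum principle (quasigeodesic_height_bound).  Over any half-space
      {<., w> <= 0} containing gamma 0 and gamma n, every height of gamma is at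
      most 32 sqrt delta.  Around gamma s, the points gamma (s - 4), gamma s,
      gamma (s + 4) form an almost degenerate triangle, so gamma s is
      O(sqrt delta)-close to a point y = l gamma (s - 4) + m gamma (s + 4) of
      the geodesic between them with l, m <= 1/4; by linearity y is at most
      half as high as the highest point, and the supremum M of the heights
      satisfies M <= M/2 + 8 sqrt delta (1 + M).
   2. Half-space criterion (close_to_segment).  A point rising at most B <= 1
      above every half-space containing p and q is within 3B of [p, q]: test
      it against the normal of its projection onto span(p, q) and against the
      normals to [p, q] at its endpoints. *)

From Stdlib Require Import Reals Lra Psatz.
Open Scope R_scope.

Definition lincomb (l : R) (a : R4) (m : R) (b : R4) : R4 :=
  match a, b with
  | (a0, a1, a2, a3), (b0, b1, b2, b3) =>
      (l*a0 + m*b0, l*a1 + m*b1, l*a2 + m*b2, l*a3 + m*b3)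
  end.

Ltac coords x :=
  let x0 := fresh x "0" in let x1 := fresh x "1" in
  let x2 := fresh x "2" in let x3 := fresh x "3" in
  destruct x as [[[x0 x1] x2] x3].

Lemma mink_sym x y : mink x y = mink y x.
Proof. coords x; coords y; simpl; ring. Qed.

Lemma mink_lincomb_l l a m b w :
  mink (lincomb l a m b) w = l * mink a w + m * mink b w.
Proof. coords a; coords b; coords w; simpl; ring. Qed.

Lemma mink_lincomb_r l a m b w :
  mink w (lincomb l a m b) = l * mink w a + m * mink w b.
Proof. coords a; coords b; coords w; simpl; ring. Qed.

Lemma mink_lincomb_sq l a m b :
  mink (lincomb l a m b) (lincomb l a m b) =
  l*l*mink a a + 2*l*m*mink a b + m*m*mink b b.
Proof. coords a; coords b; simpl; ring. Qed.

Lemma mink_zero_r x : mink x (0, 0, 0, 0) = 0.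
Proof. coords x; simpl; ring. Qed.

(* Euclidean Cauchy-Schwarz in R^3 (Lagrange's identity). *)
Lemma cauchy_schwarz3 a1 a2 a3 b1 b2 b3 :
  (a1*b1 + a2*b2 + a3*b3) * (a1*b1 + a2*b2 + a3*b3) <=
  (a1*a1 + a2*a2 + a3*a3) * (b1*b1 + b2*b2 + b3*b3).
Proof.
  pose proof (Rle_0_sqr (a1*b2 - a2*b1)); pose proof (Rle_0_sqr (a1*b3 - a3*b1));
  pose proof (Rle_0_sqr (a2*b3 - a3*b2)); unfold Rsqr in *; nra.
Qed.

(* Reverse Cauchy-Schwarz on the hyperboloid: two points of H^3 pair to at
   most -1, so that [dH] is the arcosh of a number >= 1. *)
Lemma mink_H3_le x y : inH3 x -> inH3 y -> 1 <= - mink x y.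
Proof.
  coords x; coords y; unfold inH3; simpl; intros [Hx Px] [Hy Py].
  set (S := x1*y1 + x2*y2 + x3*y3).
  assert (HS2 : S*S <= (x1*x1+x2*x2+x3*x3)*(y1*y1+y2*y2+y3*y3))
    by apply cauchy_schwarz3.
  assert (HS1 : 2*S <= (x1*x1+x2*x2+x3*x3)+(y1*y1+y2*y2+y3*y3)).
  { unfold S. pose proof (Rle_0_sqr (x1-y1)); pose proof (Rle_0_sqr (x2-y2));
    pose proof (Rle_0_sqr (x3-y3)); unfold Rsqr in *; nra. }
  assert (Hx0 : x0*x0 = 1 + (x1*x1+x2*x2+x3*x3)) by lra.
  assert (Hy0 : y0*y0 = 1 + (y1*y1+y2*y2+y3*y3)) by lra.
  assert (H : (1+S)*(1+S) <= (x0*y0)*(x0*y0)).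
  { replace ((x0*y0)*(x0*y0)) with ((x0*x0)*(y0*y0)) by ring.
    rewrite Hx0, Hy0. nra. }
  assert (0 < x0*y0) by nra.
  assert (1 + S <= x0*y0) by nra.
  unfold S in *. lra.
Qed.

Definition time_coord (v : R4) : R := match v with (v0, _, _, _) => v0 end.
Definition spatial_sq (v : R4) : R :=
  match v with (_, v1, v2, v3) => v1*v1 + v2*v2 + v3*v3 end.

(* The Minkowski complement of a unit timelike vector x is spacelike: the
   Minkowski norm of v in it dominates its spatial norm up to the factor x0^2. *)
Lemma orth_timelike_bound x v : mink x x = -1 -> mink v x = 0 ->
  spatial_sq v <= time_coord x * time_coord x * mink v v.
Proof.
  unfold time_coord, spatial_sq; coords x; coords v; simpl; intros Hx Hv.
  set (S := v1*x1 + v2*x2 + v3*x3).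
  assert (HS2 : S*S <= (v1*v1+v2*v2+v3*v3)*(x1*x1+x2*x2+x3*x3))
    by apply cauchy_schwarz3.
  assert (E : v0*x0 = S) by (unfold S; lra).
  assert (Hx0 : x0*x0 = 1 + (x1*x1+x2*x2+x3*x3)) by lra.
  assert (E2 : x0 * x0 * (- (v0 * v0) + v1 * v1 + v2 * v2 + v3 * v3)
             = - (S*S) + (x0*x0)*(v1*v1+v2*v2+v3*v3)) by (rewrite <- E; ring).
  rewrite E2, Hx0. nra.
Qed.

Lemma time_coord_sq x : mink x x = -1 -> 1 <= time_coord x * time_coord x.
Proof. unfold time_coord; coords x; simpl; intros; nra. Qed.

Lemma spatial_sq_nonneg v : 0 <= spatial_sq v.
Proof. unfold spatial_sq; coords v; nra. Qed.

Lemma orth_timelike_nonneg x v : mink x x = -1 -> mink v x = 0 -> 0 <= mink v v.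
Proof.
  intros Hx Hv. pose proof (orth_timelike_bound x v Hx Hv).
  pose proof (time_coord_sq x Hx). pose proof (spatial_sq_nonneg v). nra.
Qed.

Lemma orth_timelike_null x v : mink x x = -1 -> mink v x = 0 -> mink v v = 0 ->
  v = (0, 0, 0, 0).
Proof.
  intros Hx Hv Hvv. pose proof (orth_timelike_bound x v Hx Hv) as Hb.
  pose proof (time_coord_sq x Hx) as Ht. rewrite Hvv, Rmult_0_r in Hb.
  revert Hv Hb Ht. unfold time_coord, spatial_sq; coords x; coords v; simpl. intros Hv Hb Ht.
  assert (v1 = 0) by nra. assert (v2 = 0) by nra. assert (v3 = 0) by nra. subst.
  assert (v0 = 0) by nra. subst. reflexivity.
Qed.

Lemma quad_disc A B C : 0 <= C -> (forall t, 0 <= A + 2*B*t + C*t*t) -> B*B <= A*C.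
Proof.
  intros HC0 H.
  destruct (Rlt_dec 0 C) as [HC|HC].
  - specialize (H (-B/C)).
    replace (A + 2*B*(-B/C) + C*(-B/C)*(-B/C)) with (A - B*B/C) in H by (field; lra).
    assert (0 <= (A - B*B/C)*C) by nra.
    replace (A * C) with ((A - B*B/C)*C + B*B) by (field; lra). lra.
  - assert (HC1 : C = 0) by lra. subst C.
    destruct (Req_dec B 0) as [HB|HB].
    + subst. lra.
    + specialize (H (-(A+1)/(2*B))).
      replace (A + 2*B*(-(A+1)/(2*B)) + 0*(-(A+1)/(2*B))*(-(A+1)/(2*B))) with (-1) in H
        by (field; lra). lra.
Qed.

Lemma cauchy_schwarz_orth x u v : mink x x = -1 -> mink u x = 0 -> mink v x = 0 ->
  mink u v * mink u v <= mink u u * mink v v.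
Proof.
  intros Hx Hu Hv. apply quad_disc.
  - apply (orth_timelike_nonneg x); auto.
  - intros t.
    replace (mink u u + 2 * mink u v * t + mink v v * t * t)
      with (mink (lincomb 1 u t v) (lincomb 1 u t v)) by (rewrite mink_lincomb_sq; ring).
    apply (orth_timelike_nonneg x); auto.
    rewrite mink_lincomb_l, Hu, Hv. ring.
Qed.

Lemma lincomb_H3 l a m b : inH3 a -> inH3 b -> 0 <= l -> 0 <= m ->
  mink (lincomb l a m b) (lincomb l a m b) = -1 -> inH3 (lincomb l a m b).
Proof.
  intros Ha Hb Hl Hm Hy. split; auto.
  destruct Ha as [_ Ha]. destruct Hb as [_ Hb].
  revert Hy Ha Hb. coords a; coords b; simpl. intros Hy Ha Hb.
  destruct (Rle_lt_or_eq_dec 0 l Hl) as [Hl'|Hl']; [nra|].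
  destruct (Rle_lt_or_eq_dec 0 m Hm) as [Hm'|Hm']; [nra|].
  subst. nra.
Qed.

(* Proof: Cauchy-Schwarz in x^perp
   for the projections of y and w. *)
Lemma height_transfer x y w : mink x x = -1 -> mink y y = -1 -> mink w w = 1 ->
  (- mink x y * mink x w - mink y w) * (- mink x y * mink x w - mink y w) <=
  (mink x y * mink x y - 1) * (1 + mink x w * mink x w).
Proof.
  intros Hx Hy Hw.
  set (K := - mink x y).
  set (u := lincomb K x (-1) y). set (v := lincomb 1 w (mink w x) x).
  assert (Hux : mink u x = 0).
  { unfold u. rewrite mink_lincomb_l, Hx, (mink_sym y x). unfold K. ring. }
  assert (Hvx : mink v x = 0).
  { unfold v. rewrite mink_lincomb_l, Hx. ring. }
  pose proof (cauchy_schwarz_orth x u v Hx Hux Hvx) as H.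
  assert (E1 : mink u v = K * mink x w - mink y w).
  { unfold v. rewrite mink_lincomb_r, Hux. unfold u. rewrite mink_lincomb_l. ring. }
  assert (E2 : mink u u = mink x y * mink x y - 1).
  { unfold u. rewrite mink_lincomb_sq, Hx, Hy. unfold K. ring. }
  assert (E3 : mink v v = 1 + mink x w * mink x w).
  { unfold v. rewrite mink_lincomb_sq, Hx, Hw, (mink_sym w x). ring. }
  rewrite E1, E2, E3 in H. exact H.
Qed.

Lemma sq_le a b : 0 <= b -> a*a <= b*b -> a <= b.
Proof. intros. nra. Qed.

Lemma height_growth x y w : inH3 x -> inH3 y -> mink w w = 1 ->
  mink y w <= - mink x y * (1 + mink x w + Rabs (mink x w)).
Proof.
  intros Hx Hy Hw.
  pose proof (height_transfer x y w (proj1 Hx) (proj1 Hy) Hw) as Ht.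
  pose proof (mink_H3_le x y Hx Hy) as HK.
  set (K := - mink x y) in *. set (h := mink x w) in *. set (g := mink y w) in *.
  replace (mink x y * mink x y) with (K*K) in Ht by (unfold K; ring).
  pose proof (Rsqr_abs h) as Habs. unfold Rsqr in Habs.
  pose proof (Rle_abs h). pose proof (Rabs_pos h).
  assert (Hsq : (g - K*h) * (g - K*h) <= (K*(1 + Rabs h)) * (K*(1 + Rabs h))).
  { apply Rle_trans with ((K*K - 1) * (1 + h*h)); [nra|].
    rewrite Habs. nra. }
  assert (g - K*h <= K * (1 + Rabs h)) by (apply sq_le; nra).
  lra.
Qed.

Lemma height_near x y w e H : inH3 x -> inH3 y -> mink w w = 1 -> 0 <= e ->
  mink x y * mink x y - 1 <= e * e -> 0 <= mink x w <= H ->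
  mink x w <= mink y w + e * (1 + H).
Proof.
  intros Hx Hy Hw He Hclose Hh.
  pose proof (height_transfer x y w (proj1 Hx) (proj1 Hy) Hw) as Ht.
  pose proof (mink_H3_le x y Hx Hy) as HK.
  set (K := - mink x y) in *. set (h := mink x w) in *. set (g := mink y w) in *.
  replace (mink x y * mink x y) with (K*K) in Ht, Hclose by (unfold K; ring).
  assert (Hsq : (K*h - g) * (K*h - g) <= (e*(1+H)) * (e*(1+H))).
  { apply Rle_trans with (1 := Ht).
    replace ((e*(1+H)) * (e*(1+H))) with ((e*e) * ((1+H)*(1+H))) by ring.
    apply Rmult_le_compat; nra. }
  assert (K*h - g <= e*(1+H)) by (apply sq_le; nra).
  nra.
Qed.

Lemma exp_le a b : a <= b -> exp a <= exp b.
Proof. intros [H|H]. - left. apply exp_increasing; auto. - subst; lra. Qed.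

Lemma ln_le a b : 0 < a -> a <= b -> ln a <= ln b.
Proof. intros H [H'|H']. - left. apply ln_increasing; auto. - subst; lra. Qed.

Lemma exp_ge1 t : 0 <= t -> 1 <= exp t.
Proof. intros. rewrite <- exp_0. apply exp_le; auto. Qed.

Lemma exp_minus u v : exp (u - v) = exp u / exp v.
Proof. unfold Rminus. rewrite exp_plus, exp_Ropp. reflexivity. Qed.

Lemma exp_neg_le x : 0 <= x -> exp (- x) <= 1 / (1 + x).
Proof.
  intros H. rewrite exp_Ropp. pose proof (exp_ineq1_le x).
  unfold Rdiv. rewrite Rmult_1_l. apply Rinv_le_contravar; lra.
Qed.

Lemma exp_le_inv x : 0 <= x < 1 -> exp x <= 1 / (1 - x).
Proof.
  intros H. replace x with (- (- x)) at 1 by ring. rewrite exp_Ropp.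
  pose proof (exp_ineq1_le (- x)).
  unfold Rdiv. rewrite Rmult_1_l. apply Rinv_le_contravar; lra.
Qed.

Lemma div_le a b c : 0 < b -> a <= c * b -> a / b <= c.
Proof.
  intros Hb H. apply (Rmult_le_reg_r b); auto.
  unfold Rdiv. rewrite Rmult_assoc, Rinv_l, Rmult_1_r; lra.
Qed.

Lemma div_nonneg a b : 0 <= a -> 0 < b -> 0 <= a / b.
Proof. intros. unfold Rdiv. apply Rmult_le_pos; auto. left; apply Rinv_0_lt_compat; auto. Qed.

(* Identities between cosh and sinh are rational identities in exp: the
   Pythagorean identity and three forms of the addition formulas used for
   points on a geodesic. *)
Ltac hyperbolic_identity :=
  unfold sinh, cosh; rewrite ?exp_Ropp, ?exp_minus, ?exp_plus;
  field; repeat split; apply Rgt_not_eq, exp_pos.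

Lemma cosh_sq_sub D : cosh D * cosh D - 1 = sinh D * sinh D.
Proof. hyperbolic_identity. Qed.

Lemma sinh_cosh_split D t : sinh D * cosh t = sinh (D - t) + sinh t * cosh D.
Proof. hyperbolic_identity. Qed.

Lemma sinh_sum_split D t : sinh (D - t) * cosh t + sinh t * cosh (D - t) = sinh D.
Proof. hyperbolic_identity. Qed.

Lemma sinh_interp_identity D u : sinh (D - u) * sinh (D - u) + sinh u * sinh u +
  2 * sinh (D - u) * sinh u * cosh D = sinh D * sinh D.
Proof. hyperbolic_identity. Qed.

Lemma cosh_le_exp d : 0 <= d -> cosh d <= exp d.
Proof. intros H. unfold cosh. assert (exp (- d) <= exp d) by (apply exp_le; lra). lra. Qed.

Lemma cosh_mono a b : 0 <= a -> a <= b -> cosh a <= cosh b.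
Proof.
  intros Ha Hab. unfold cosh. rewrite !exp_Ropp.
  pose proof (exp_ge1 a Ha). pose proof (exp_le a b Hab).
  set (X := exp a) in *. set (Y := exp b) in *.
  assert (Y + /Y - (X + /X) = (Y - X)*(X*Y - 1)/(X*Y)) by (field; lra).
  assert (0 <= (Y - X)*(X*Y - 1)/(X*Y)) by (apply div_nonneg; [apply Rmult_le_pos|]; nra).
  lra.
Qed.

Lemma sinh_pos t : 0 < t -> 0 < sinh t.
Proof. intros H. rewrite <- sinh_0. apply sinh_lt; auto. Qed.

Lemma sinh_nonneg t : 0 <= t -> 0 <= sinh t.
Proof. intros [H|H]. - left; apply sinh_pos; auto. - subst; rewrite sinh_0; lra. Qed.

Lemma sinh_ratio u g : 0 <= u -> 0 <= g -> sinh u <= exp (- g) * sinh (u + g).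
Proof.
  intros Hu Hg. unfold sinh. rewrite !exp_Ropp, exp_plus.
  pose proof (exp_ge1 u Hu). pose proof (exp_ge1 g Hg).
  set (U := exp u) in *. set (G := exp g) in *.
  assert (E: /G * ((U*G - /(U*G))/2) - (U - /U)/2 = (G*G - 1)/(2*U*G*G)) by (field; lra).
  assert (0 <= (G*G - 1)/(2*U*G*G)) by (apply div_nonneg; nra).
  lra.
Qed.

(* The estimate behind thin triangles: a detour of length excess e costs at
   most a factor e^e in the interpolation formula for a point on a geodesic. *)
Lemma excess_estimate al c e : 0 <= al -> 0 <= c -> 0 <= e ->
  sinh c * cosh al + sinh al * cosh (c + e) <= exp e * sinh (al + c).
Proof.
  intros Ha Hc He. unfold sinh, cosh. rewrite !exp_Ropp, !exp_plus.
  pose proof (exp_ge1 al Ha). pose proof (exp_ge1 c Hc). pose proof (exp_ge1 e He).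
  set (X := exp al) in *. set (Y := exp c) in *. set (Z := exp e) in *.
  assert (E : Z * ((X*Y - /(X*Y))/2) - ((Y - /Y)/2 * ((X + /X)/2) + (X - /X)/2 * ((Y*Z + /(Y*Z))/2))
     = (Z-1)*(X*X*Y*Y*Z + Y*Y*Z + X*X - (2*Z+1)) / (4*X*Y*Z)) by (field; lra).
  assert (0 <= (Z-1)*(X*X*Y*Y*Z + Y*Y*Z + X*X - (2*Z+1)) / (4*X*Y*Z)).
  { apply div_nonneg; [|assert (0 < X*Y) by nra; nra]. apply Rmult_le_pos; [lra|].
    assert (1 <= X*X) by nra. assert (1 <= Y*Y) by nra.
    assert (Z <= X*X*Y*Y*Z) by (assert (1 <= X*X*(Y*Y)) by nra; nra).
    nra. }
  lra.
Qed.

Lemma cosh_arcosh K : 1 <= K -> cosh (arcosh K) = K.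
Proof.
  intros H. unfold cosh, arcosh. rewrite exp_Ropp.
  set (s := sqrt (K*K-1)).
  assert (Hs : 0 <= s) by apply sqrt_pos.
  assert (Hss : s * s = K*K - 1) by (apply sqrt_sqrt; nra).
  rewrite exp_ln by lra.
  assert (E : / (K + s) = K - s).
  { apply Rmult_eq_reg_l with (K+s); [|lra]. rewrite Rinv_r by lra. nra. }
  rewrite E. field.
Qed.

Lemma arcosh_nonneg K : 1 <= K -> 0 <= arcosh K.
Proof.
  intros H. unfold arcosh. rewrite <- ln_1. apply ln_le; [lra|].
  pose proof (sqrt_pos (K*K-1)). lra.
Qed.

Lemma arcosh_small K B : 1 <= K -> K*K <= 1 + 2*B*B -> 0 <= B <= 1 -> arcosh K <= 3*B.
Proof.
  intros HK HKB HB. unfold arcosh.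
  assert (H2 : sqrt (K*K-1) <= 2*B).
  { rewrite <- (sqrt_square (2*B)) by lra. apply sqrt_le_1_alt. nra. }
  apply Rle_trans with (ln (1 + 3*B)).
  - apply ln_le; [pose proof (sqrt_pos (K*K-1)); lra | nra].
  - apply Rle_trans with (ln (exp (3*B))); [apply ln_le; [lra|apply exp_ineq1_le]|].
    rewrite ln_exp; lra.
Qed.

(* Minimising a positive combination al cosh t + be cosh (D - t) over [0, D]:
   at the balance point e^{2t} = (al + be e^D) / (al + be e^-D) its square is
   al^2 + be^2 + 2 al be cosh D. *)
Lemma cosh_combination_balance al be D : 0 <= al -> 0 <= be -> 0 < al + be -> 0 <= D ->
  exists t, 0 <= t <= D /\
    (al * cosh t + be * cosh (D - t)) * (al * cosh t + be * cosh (D - t)) =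
    al*al + be*be + 2*al*be*cosh D.
Proof.
  intros Hal Hbe Hpos HD.
  set (Y := exp D). assert (HY : 1 <= Y) by (apply exp_ge1; auto).
  set (P := al + be / Y). set (Q := al + be * Y).
  assert (HP : 0 < P).
  { unfold P. assert (be <= be * Y) by nra.
    assert (be / Y * Y = be) by (field; lra). nra. }
  assert (HQ : P <= Q /\ Q <= Y*Y*P).
  { assert (HYY : 1 <= Y*Y) by nra.
    unfold P, Q. split.
    - assert (be / Y <= be * Y); [apply div_le; [lra|] | lra].
      replace (be * Y * Y) with (be * (Y*Y)) by ring. nra.
    - replace (Y*Y*(al + be/Y)) with (Y*Y*al + be*Y) by (field; lra). nra. }
  assert (HQP : 0 < Q / P) by (apply Rdiv_lt_0_compat; lra).
  set (t := ln (Q / P) / 2). set (T := exp t).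
  assert (HT : 0 < T) by apply exp_pos.
  assert (HTT : T*T = Q/P).
  { unfold T. rewrite <- exp_plus. replace (t + t) with (ln (Q/P)) by (unfold t; field).
    apply exp_ln; auto. }
  exists t. split; [split|].
  - unfold t. assert (0 <= ln (Q/P)); [|lra]. rewrite <- ln_1. apply ln_le; [lra|].
    apply (Rmult_le_reg_r P); auto. unfold Rdiv. rewrite Rmult_assoc, Rinv_l by lra. lra.
  - unfold t. assert (ln (Q/P) <= 2*D); [|lra].
    replace (2*D) with (ln (Y*Y)) by (unfold Y; rewrite <- exp_plus, ln_exp; ring).
    apply ln_le; auto. apply div_le; lra.
  - assert (EK : al * cosh t + be * cosh (D - t) = T * P).
    { transitivity ((T*P + Q/T)/2).
      - unfold cosh. rewrite exp_minus, !exp_Ropp, exp_minus. fold Y T.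
        unfold P, Q. field. lra.
      - replace Q with (T*T*P) by (rewrite HTT; field; lra). field. lra. }
    rewrite EK. replace (T*P*(T*P)) with (T*T*P*P) by ring. rewrite HTT.
    replace (Q/P*P*P) with (Q*P) by (field; lra).
    unfold cosh. rewrite exp_Ropp. fold Y. unfold Q, P. field. lra.
Qed.

(* Bound for the minimum of al cosh t + be cosh (D - t) over [0, D] under
   the projection bound and the overshoot bounds -al sinh D, -be sinh D <= B:
   if al or be is negative, use the endpoint t = D or t = 0; otherwise use the
   balance point. *)
Lemma cosh_combination_min al be D B : 0 <= D -> 0 <= B ->
  1 <= al + be * cosh D ->
  al*al + be*be + 2*al*be*cosh D <= 1 + B*B ->
  - al * sinh D <= B -> - be * sinh D <= B ->
  exists t, 0 <= t <= D /\
    (al * cosh t + be * cosh (D - t)) * (al * cosh t + be * cosh (D - t)) <= 1 + 2*B*B.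
Proof.
  intros HD HB HA Hpi Hal Hbe.
  pose proof (cosh_sq_sub D) as HCS. pose proof (sinh_nonneg D HD) as HS.
  destruct (Rlt_dec be 0) as [Hb0|Hb0].
  { exists 0. split; [lra|]. rewrite cosh_0, Rminus_0_r.
    assert (0 <= - be * sinh D) by nra. nra. }
  destruct (Rlt_dec al 0) as [Ha0|Ha0].
  { exists D. split; [lra|]. rewrite Rminus_diag, cosh_0.
    assert (0 <= - al * sinh D) by nra. nra. }
  assert (Hpos : 0 < al + be).
  { destruct (Req_dec be 0) as [Hb|Hb]; [rewrite Hb in HA; lra | lra]. }
  destruct (cosh_combination_balance al be D) as [t [Ht Heq]]; try lra.
  exists t. split; auto. rewrite Heq. nra.
Qed.

Lemma cosh_dH x y : inH3 x -> inH3 y -> cosh (dH x y) = - mink x y.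
Proof. intros. unfold dH. apply cosh_arcosh, mink_H3_le; auto. Qed.

Lemma dH_nonneg x y : inH3 x -> inH3 y -> 0 <= dH x y.
Proof. intros. unfold dH. apply arcosh_nonneg, mink_H3_le; auto. Qed.

Lemma dH_sym x y : dH x y = dH y x.
Proof. unfold dH. rewrite mink_sym. reflexivity. Qed.

Lemma dH_zero_pairing p q : inH3 p -> inH3 q -> dH p q = 0 ->
  forall w, mink p w = mink q w.
Proof.
  intros Hp Hq HD w.
  assert (Epq : mink p q = -1).
  { pose proof (cosh_dH p q Hp Hq) as E. rewrite HD, cosh_0 in E. lra. }
  assert (Hpp : mink p p = -1) by apply Hp. assert (Hqq : mink q q = -1) by apply Hq.
  set (v := lincomb 1 p (-1) q).
  assert (Hv : v = (0, 0, 0, 0)).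
  { apply (orth_timelike_null p); auto.
    - unfold v. rewrite mink_lincomb_l, (mink_sym q p), Epq, Hpp. ring.
    - unfold v. rewrite mink_lincomb_sq, Epq, Hpp, Hqq. ring. }
  assert (H0 : mink w v = 0) by (rewrite Hv; apply mink_zero_r).
  unfold v in H0. rewrite mink_lincomb_r, (mink_sym w p), (mink_sym w q) in H0. lra.
Qed.

(* The point of the geodesic [a, b] at distance u from a is
   (sinh (D - u) a + sinh u b) / sinh D, where D = d(a,b).  Before
   normalisation this combination has Minkowski norm -sinh^2 D. *)
Lemma interp_norm a b u : inH3 a -> inH3 b ->
  mink (lincomb (sinh (dH a b - u)) a (sinh u) b) (lincomb (sinh (dH a b - u)) a (sinh u) b)
  = - (sinh (dH a b) * sinh (dH a b)).
Proof.
  intros Ha Hb. rewrite mink_lincomb_sq, (proj1 Ha), (proj1 Hb).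
  replace (mink a b) with (- cosh (dH a b)) by (rewrite cosh_dH by auto; ring).
  rewrite <- (sinh_interp_identity (dH a b) u). ring.
Qed.

Lemma interp_unit a b u : inH3 a -> inH3 b -> 0 < dH a b ->
  mink (lincomb (sinh (dH a b - u) / sinh (dH a b)) a (sinh u / sinh (dH a b)) b)
       (lincomb (sinh (dH a b - u) / sinh (dH a b)) a (sinh u / sinh (dH a b)) b) = -1.
Proof.
  intros Ha Hb HD. pose proof (interp_norm a b u Ha Hb) as Hnorm.
  pose proof (sinh_pos _ HD) as HS.
  rewrite mink_lincomb_sq. rewrite mink_lincomb_sq in Hnorm.
  replace (-1) with (- (sinh (dH a b) * sinh (dH a b)) / (sinh (dH a b) * sinh (dH a b)))
    by (field; lra).
  rewrite <- Hnorm. field. lra.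
Qed.

Lemma interp_weights D u : 0 <= u <= D -> 0 < D ->
  0 <= sinh (D - u) / sinh D <= exp (- u) /\ 0 <= sinh u / sinh D <= exp (u - D).
Proof.
  intros Hu HD. pose proof (sinh_pos _ HD) as HS.
  pose proof (sinh_nonneg (D - u) ltac:(lra)). pose proof (sinh_nonneg u ltac:(lra)).
  pose proof (sinh_ratio (D - u) u ltac:(lra) ltac:(lra)) as Rl.
  pose proof (sinh_ratio u (D - u) ltac:(lra) ltac:(lra)) as Rm.
  replace (D - u + u) with D in Rl by ring. replace (u + (D - u)) with D in Rm by ring.
  replace (- (D - u)) with (u - D) in Rm by ring.
  repeat split; try (apply div_nonneg; auto); apply div_le; auto; lra.
Qed.

(* For d(a,x) < d(a,b) take
   the point at distance d(a,x) from a; otherwise take y = b. *)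
Lemma thin_triangle_point a x b e : inH3 a -> inH3 x -> inH3 b -> 0 <= e ->
  dH a x + dH x b <= dH a b + e ->
  exists l m, 0 <= l <= exp (e - dH a x) /\ 0 <= m <= exp (e - dH x b) /\
    inH3 (lincomb l a m b) /\ - mink x (lincomb l a m b) <= exp e.
Proof.
  intros Ha Hx Hb He Hex.
  pose proof (dH_nonneg a x Ha Hx) as Hal. pose proof (dH_nonneg x b Hx Hb) as Hbe.
  pose proof (cosh_dH a x Ha Hx) as Cal. pose proof (cosh_dH x b Hx Hb) as Cbe.
  destruct (Rlt_dec (dH a x) (dH a b)) as [Hlt|Hge].
  - pose proof (interp_unit a b (dH a x) Ha Hb ltac:(lra)) as Hy.
    destruct (interp_weights (dH a b) (dH a x) ltac:(lra) ltac:(lra)) as [Hl Hm].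
    pose proof (sinh_pos _ (Rle_lt_trans _ _ _ Hal Hlt)) as HS.
    set (al := dH a x) in *. set (be := dH x b) in *. set (D := dH a b) in *.
    exists (sinh (D - al) / sinh D), (sinh al / sinh D).
    split; [split; [lra | eapply Rle_trans; [apply Hl | apply exp_le; lra]] |].
    split; [split; [lra | eapply Rle_trans; [apply Hm | apply exp_le; lra]] |].
    split; [apply lincomb_H3; auto; lra |].
    rewrite mink_lincomb_r, (mink_sym x a).
    replace (- (sinh (D - al) / sinh D * mink a x + sinh al / sinh D * mink x b))
      with ((sinh (D - al) * cosh al + sinh al * cosh be) / sinh D)
      by (rewrite Cal, Cbe; field; lra).
    apply div_le; auto.
    pose proof (excess_estimate al (D - al) e Hal ltac:(lra) He) as Hest.
    replace (al + (D - al)) with D in Hest by ring.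
    assert (cosh be <= cosh (D - al + e)) by (apply cosh_mono; lra).
    pose proof (sinh_nonneg al Hal). nra.
  - exists 0, 1.
    assert (Hy : mink (lincomb 0 a 1 b) (lincomb 0 a 1 b) = -1)
      by (rewrite mink_lincomb_sq, (proj1 Hb); ring).
    repeat split; try lra.
    + left; apply exp_pos.
    + apply exp_ge1. lra.
    + apply lincomb_H3; auto; lra.
    + rewrite mink_lincomb_r.
      replace (- (0 * mink x a + 1 * mink x b)) with (cosh (dH x b)) by (rewrite Cbe; ring).
      eapply Rle_trans; [apply cosh_le_exp; auto|]. apply exp_le. lra.
Qed.

Lemma geodesic_pairing p q c t x : inH3 p -> inH3 q -> geodesic_segment p q c ->
  0 <= t <= dH p q ->
  sinh (dH p q) * mink x (c t) = sinh (dH p q - t) * mink x p + sinh t * mink x q.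
Proof.
  intros Hp Hq [Hc [Hc0 [HcD Hiso]]] Ht.
  pose proof (interp_norm p q t Hp Hq) as Hnorm.
  set (D := dH p q) in *.
  assert (Hy := Hc t Ht).
  assert (Ep : mink (c t) p = - cosh t).
  { pose proof (Hiso t 0 Ht ltac:(lra)) as E.
    rewrite Hc0, Rminus_0_r, Rabs_right in E by lra.
    pose proof (cosh_dH (c t) p Hy Hp) as C. rewrite E in C. lra. }
  assert (Eq : mink (c t) q = - cosh (D - t)).
  { pose proof (Hiso t D Ht ltac:(lra)) as E.
    rewrite HcD, Rabs_minus_sym, Rabs_right in E by lra.
    pose proof (cosh_dH (c t) q Hy Hq) as C. rewrite E in C. lra. }
  assert (Epq : mink p q = - cosh D) by (unfold D; rewrite cosh_dH; auto; ring).
  set (u := lincomb (sinh (D - t)) p (sinh t) q) in *.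
  set (v := lincomb (sinh D) (c t) (-1) u).
  assert (Hv : v = (0, 0, 0, 0)).
  { apply (orth_timelike_null p); [apply Hp| |].
    - unfold v, u. rewrite !mink_lincomb_l, (mink_sym q p), Ep, Epq, (proj1 Hp).
      pose proof (sinh_cosh_split D t). lra.
    - unfold v. rewrite mink_lincomb_sq, Hnorm, (proj1 Hy).
      unfold u. rewrite mink_lincomb_r, Ep, Eq.
      pose proof (sinh_sum_split D t). nra. }
  assert (H0 : mink x v = 0) by (rewrite Hv; apply mink_zero_r).
  unfold v, u in H0. rewrite !mink_lincomb_r in H0. lra.
Qed.

Lemma pairing_on_segment p q c x al be t : inH3 p -> inH3 q -> geodesic_segment p q c ->
  0 < dH p q -> 0 <= t <= dH p q ->
  - mink x p = al + be * cosh (dH p q) -> - mink x q = al * cosh (dH p q) + be ->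
  - mink x (c t) = al * cosh t + be * cosh (dH p q - t).
Proof.
  intros Hp Hq Hgeo HD Ht Ep Eq.
  pose proof (geodesic_pairing p q c t x Hp Hq Hgeo Ht) as Hrep.
  pose proof (sinh_cosh_split (dH p q) t) as I1.
  pose proof (sinh_cosh_split (dH p q) (dH p q - t)) as I3.
  replace (dH p q - (dH p q - t)) with t in I3 by ring.
  assert (HS : 0 < sinh (dH p q)) by (apply sinh_pos; auto).
  apply (Rmult_eq_reg_l (sinh (dH p q))); [|lra].
  replace (sinh (dH p q) * - mink x (c t)) with (- (sinh (dH p q) * mink x (c t))) by ring.
  rewrite Hrep.
  replace (mink x p) with (- (al + be * cosh (dH p q))) by lra.
  replace (mink x q) with (- (al * cosh (dH p q) + be)) by lra.
  replace (sinh (dH p q) * (al * cosh t + be * cosh (dH p q - t))) with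
    (al * (sinh (dH p q) * cosh t) + be * (sinh (dH p q) * cosh (dH p q - t))) by ring.
  rewrite I1, I3. ring.
Qed.

Lemma Rabs_ord a b : a <= b -> Rabs (a - b) = b - a.
Proof. intros. rewrite Rabs_minus_sym, Rabs_right by lra. reflexivity. Qed.

Lemma left_window r s : 0 <= r -> 0 <= s ->
  exists s1, 0 <= s1 <= s /\ s - s1 <= r /\ (s1 = 0 \/ Rabs (s1 - s) = r).
Proof.
  intros Hr Hs. destruct (Rle_dec r s) as [H|H].
  - exists (s - r). repeat split; try lra. right. rewrite Rabs_ord; lra.
  - exists 0. repeat split; lra.
Qed.

Lemma right_window r s n : 0 <= r -> s <= n ->
  exists s2, s <= s2 <= n /\ s2 - s <= r /\ (s2 = n \/ Rabs (s2 - s) = r).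
Proof.
  intros Hr Hs. destruct (Rle_dec (s + r) n) as [H|H].
  - exists (s + r). repeat split; try lra. right. rewrite Rabs_right; lra.
  - exists n. repeat split; lra.
Qed.

Lemma div_one_plus a d : 0 <= a -> 0 < d -> a - a * d <= a / (1 + d).
Proof.
  intros Ha Hd. replace (a / (1 + d)) with (a - a*d + a*d*d/(1+d)) by (field; lra).
  assert (0 <= a*d*d/(1+d)) by (apply div_nonneg; [apply Rmult_le_pos; nra|lra]).
  lra.
Qed.

(* For small d, cosh d(x,y) <= e^{30 d} gives cosh^2 - 1 <= 64 d. *)
Lemma exp_sq_small d : 0 <= d <= 1/4096 -> exp (30*d) * exp (30*d) <= 1 + 64*d.
Proof.
  intros Hd. rewrite <- exp_plus.
  eapply Rle_trans; [apply exp_le_inv; lra|].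
  apply div_le; [lra|]. nra.
Qed.

Section QuasigeodesicHeight.

Variables (delta n : R) (gamma : R -> R4) (w : R4).
Hypothesis delta_small : 0 < delta <= 1/4096.
Hypothesis n_nonneg : 0 <= n.
Hypothesis qg : quasigeodesic delta n gamma.
Hypothesis w_unit : mink w w = 1.
Hypothesis start_below : mink (gamma 0) w <= 0.
Hypothesis end_below : mink (gamma n) w <= 0.

Lemma height_bounded : exists U, forall s, 0 <= s <= n -> mink (gamma s) w <= U.
Proof.
  destruct qg as [Hpt [_ Hdist]].
  set (h0 := mink (gamma 0) w).
  exists (exp ((1 + delta) * n + delta) * (1 + h0 + Rabs h0)).
  intros s Hs.
  assert (H0 : inH3 (gamma 0)) by (apply Hpt; lra).
  eapply Rle_trans; [apply (height_growth (gamma 0) (gamma s) w); auto|].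
  apply Rmult_le_compat_r.
  - pose proof (Rle_abs (- h0)). rewrite Rabs_Ropp in *. fold h0. lra.
  - rewrite <- cosh_dH by auto.
    eapply Rle_trans; [apply cosh_le_exp, dH_nonneg; auto|].
    apply exp_le. destruct (Hdist 0 s ltac:(lra) Hs) as [_ Hup].
    rewrite Rabs_ord in Hup by lra. nra.
Qed.

Lemma window_thin s1 s s2 : 0 <= s1 <= s -> s <= s2 <= n -> s2 - s1 <= 8 ->
  dH (gamma s1) (gamma s) + dH (gamma s) (gamma s2) <= dH (gamma s1) (gamma s2) + 30 * delta.
Proof.
  intros H1 H2 H12. destruct qg as [_ [_ Hdist]].
  destruct (Hdist s1 s ltac:(lra) ltac:(lra)) as [_ Ha].
  destruct (Hdist s s2 ltac:(lra) ltac:(lra)) as [_ Hb].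
  destruct (Hdist s1 s2 ltac:(lra) ltac:(lra)) as [Hc _].
  rewrite Rabs_ord in Ha, Hb, Hc by lra.
  pose proof (div_one_plus (s2 - s1) delta ltac:(lra) ltac:(lra)). nra.
Qed.

Variable M : R.
Hypothesis M_nonneg : 0 <= M.
Hypothesis below_M : forall s, 0 <= s <= n -> mink (gamma s) w <= M.

(* An endpoint of a window contributes at most M/4 to the height of the thin
   triangle point: either it is an endpoint of gamma (height <= 0) or it lies
   at distance about 4 from gamma s, so its weight is <= e^{-3.7} < 1/4. *)
Lemma window_term s s' l : 0 <= s <= n -> 0 <= s' <= n ->
  s' = 0 \/ s' = n \/ Rabs (s' - s) = 4 ->
  0 <= l <= exp (30 * delta - dH (gamma s') (gamma s)) ->
  l * mink (gamma s') w <= M / 4.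
Proof.
  intros Hs Hs' Hcase Hl. pose proof (below_M s' Hs') as Hh.
  destruct Hcase as [-> | [-> | Hfar]].
  - nra.
  - nra.
  - destruct qg as [_ [_ Hdist]].
    destruct (Hdist s' s Hs' Hs) as [Hlow _]. rewrite Hfar in Hlow.
    pose proof (div_one_plus 4 delta ltac:(lra) ltac:(lra)).
    assert (l <= 1/4).
    { apply Rle_trans with (exp (- (37/10))).
      - apply Rle_trans with (1 := proj2 Hl). apply exp_le. lra.
      - apply Rle_trans with (1 / (1 + 37/10)); [apply exp_neg_le; lra | lra]. }
    nra.
Qed.

Lemma height_step s : 0 <= s <= n -> mink (gamma s) w <= M / 2 + 8 * sqrt delta * (1 + M).
Proof.
  intros Hs. pose proof qg as [Hpt _].
  assert (Hsd : 0 <= sqrt delta) by apply sqrt_pos.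
  destruct (Rle_dec (mink (gamma s) w) 0) as [Hneg|Hpos]; [nra|].
  destruct (left_window 4 s ltac:(lra) ltac:(lra)) as [s1 [Hs1 [Hs1w Hs1e]]].
  destruct (right_window 4 s n ltac:(lra) ltac:(lra)) as [s2 [Hs2 [Hs2w Hs2e]]].
  destruct (thin_triangle_point (gamma s1) (gamma s) (gamma s2) (30 * delta))
    as [l [m [Hl [Hm [Hy Hclose]]]]]; try (apply Hpt; lra); try lra.
  { apply window_thin; lra. }
  set (y := lincomb l (gamma s1) m (gamma s2)) in *.
  assert (Hyw : mink y w <= M / 2).
  { unfold y. rewrite mink_lincomb_l.
    assert (l * mink (gamma s1) w <= M / 4)
      by (apply (window_term s); [lra | lra | tauto | exact Hl]).
    assert (m * mink (gamma s2) w <= M / 4).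
    { apply (window_term s); [lra | lra | tauto |]. rewrite dH_sym. exact Hm. }
    lra. }
  assert (HK : mink (gamma s) y * mink (gamma s) y - 1 <= (8 * sqrt delta) * (8 * sqrt delta)).
  { pose proof (mink_H3_le (gamma s) y (Hpt s Hs) Hy).
    pose proof (exp_sq_small delta ltac:(lra)).
    replace ((8 * sqrt delta) * (8 * sqrt delta)) with (64 * (sqrt delta * sqrt delta)) by ring.
    rewrite sqrt_sqrt by lra. nra. }
  pose proof (height_near (gamma s) y w (8 * sqrt delta) M (Hpt s Hs) Hy w_unit
    ltac:(lra) HK ltac:(split; [lra | apply below_M; auto])).
  lra.
Qed.

End QuasigeodesicHeight.

(* If M is the
   supremum of the heights (or 0), the step lemma gives M <= M/2 + 8 sqrt delta
   (1 + M), hence M <= 32 sqrt delta. *)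
Lemma quasigeodesic_height_bound delta n gamma w :
  0 < delta <= 1/4096 -> 0 <= n -> quasigeodesic delta n gamma ->
  mink w w = 1 -> mink (gamma 0) w <= 0 -> mink (gamma n) w <= 0 ->
  forall s, 0 <= s <= n -> mink (gamma s) w <= 32 * sqrt delta.
Proof.
  intros Hd Hn Hq Hw H0 Hn0.
  set (E := fun h => exists s, 0 <= s <= n /\ h = mink (gamma s) w).
  destruct (completeness E) as [S [S_ub S_least]].
  { destruct (height_bounded delta n gamma w Hd Hn Hq Hw) as [U HU].
    exists U. intros h [s [Hs ->]]. auto. }
  { exists (mink (gamma 0) w), 0. split; [lra | reflexivity]. }
  set (M := Rmax S 0).
  assert (HM0 : 0 <= M) by apply Rmax_r.
  assert (below : forall s, 0 <= s <= n -> mink (gamma s) w <= M).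
  { intros s Hs. apply Rle_trans with S; [apply S_ub; exists s; auto | apply Rmax_l]. }
  pose proof (height_step delta n gamma w Hd Hq Hw H0 Hn0 M HM0 below) as Hstep.
  assert (HS : S <= M / 2 + 8 * sqrt delta * (1 + M)).
  { apply S_least. intros h [s [Hs ->]]. auto. }
  assert (HMM : M <= M / 2 + 8 * sqrt delta * (1 + M)).
  { apply Rmax_lub; auto. pose proof (sqrt_pos delta). nra. }
  assert (Hsd : sqrt delta * sqrt delta = delta) by (apply sqrt_sqrt; lra).
  assert (sqrt delta <= 1/64) by (pose proof (sqrt_pos delta); nra).
  intros s Hs. pose proof (below s Hs). pose proof (sqrt_pos delta). nra.
Qed.

Section HalfSpaceCriterion.

Variables (p q x : R4) (B : R).
Hypothesis p_H3 : inH3 p.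
Hypothesis q_H3 : inH3 q.
Hypothesis x_H3 : inH3 x.
Hypothesis below_halfspaces :
  forall w, mink w w = 1 -> mink p w <= 0 -> mink q w <= 0 -> mink x w <= B.

(* The criterion is homogeneous: it applies to any spacelike normal z. *)
Lemma height_along_normal z : mink p z <= 0 -> mink q z <= 0 -> 0 < mink z z ->
  mink x z <= B * sqrt (mink z z).
Proof.
  intros Hp Hq Hz. set (r := sqrt (mink z z)).
  assert (Hr : r * r = mink z z) by (apply sqrt_sqrt; lra).
  assert (Hr0 : 0 < r) by (apply sqrt_lt_R0; lra).
  set (u := lincomb (1/r) z 0 z).
  assert (Hu : forall y, mink y u = mink y z / r)
    by (intros y; unfold u; rewrite mink_lincomb_r; field; lra).
  assert (Huu : mink u u = 1) by (unfold u; rewrite mink_lincomb_sq, <- Hr; field; lra).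
  pose proof (below_halfspaces u Huu) as H. rewrite !Hu in H.
  assert (Hxz : mink x z / r <= B) by (apply H; apply div_le; lra).
  replace (mink x z) with (mink x z / r * r) by (field; lra). nra.
Qed.

Lemma projection_height y :
  mink p (lincomb 1 x (-1) y) = 0 -> mink q (lincomb 1 x (-1) y) = 0 ->
  mink y (lincomb 1 x (-1) y) = 0 -> - mink y y <= 1 + B * B.
Proof.
  intros Hp Hq Hy. set (z := lincomb 1 x (-1) y) in *.
  assert (Exy : mink x y = mink y y).
  { unfold z in Hy. rewrite mink_lincomb_r, (mink_sym y x) in Hy. lra. }
  assert (Ezz : mink z z = -1 - mink y y).
  { unfold z. rewrite mink_lincomb_sq, (proj1 x_H3), Exy. ring. }
  assert (Exz : mink x z = -1 - mink y y).
  { unfold z. rewrite mink_lincomb_r, (proj1 x_H3), Exy. ring. }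
  destruct (Rle_dec (mink z z) 0) as [Hle|Hgt]; [nra|].
  pose proof (height_along_normal z ltac:(lra) ltac:(lra) ltac:(lra)) as H.
  set (r := sqrt (mink z z)) in *.
  assert (Hr : r * r = mink z z) by (apply sqrt_sqrt; lra).
  assert (Hr0 : 0 < r) by (apply sqrt_lt_R0; lra).
  assert (r <= B) by (apply (Rmult_le_reg_r r); nra).
  nra.
Qed.

(* Projection onto span(p, q): writing -<x,p> = al + be cosh D and
   -<x,q> = al cosh D + be, the projection al p + be q of x has squared norm
   al^2 + be^2 + 2 al be cosh D <= 1 + B^2. *)
Lemma projection_onto_span al be :
  - mink x p = al + be * cosh (dH p q) -> - mink x q = al * cosh (dH p q) + be ->
  al*al + be*be + 2*al*be*cosh (dH p q) <= 1 + B*B.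
Proof.
  intros Hxp Hxq. pose proof (cosh_dH p q p_H3 q_H3) as Epq.
  set (C := cosh (dH p q)) in *. set (y := lincomb al p be q).
  assert (Hpz : mink p (lincomb 1 x (-1) y) = 0).
  { unfold y. rewrite !mink_lincomb_r, (proj1 p_H3), (mink_sym p x).
    replace (mink p q) with (- C) by lra. lra. }
  assert (Hqz : mink q (lincomb 1 x (-1) y) = 0).
  { unfold y. rewrite !mink_lincomb_r, (proj1 q_H3), (mink_sym q x), (mink_sym q p).
    replace (mink p q) with (- C) by lra. lra. }
  assert (Hyz : mink y (lincomb 1 x (-1) y) = 0).
  { unfold y at 1. rewrite mink_lincomb_l, Hpz, Hqz. ring. }
  pose proof (projection_height y Hpz Hqz Hyz) as H.
  unfold y in H. rewrite mink_lincomb_sq, (proj1 p_H3), (proj1 q_H3) in H.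
  replace (mink p q) with (- C) in H by lra. lra.
Qed.

(* Overshoot beyond the endpoint q: testing x against the hyperplane through q
   orthogonal to [p, q] gives -al sinh D <= B. *)
Lemma endpoint_overshoot al be : 0 < dH p q ->
  - mink x p = al + be * cosh (dH p q) -> - mink x q = al * cosh (dH p q) + be ->
  - al * sinh (dH p q) <= B.
Proof.
  intros HD Hxp Hxq.
  pose proof (cosh_dH p q p_H3 q_H3) as Epq. pose proof (cosh_sq_sub (dH p q)) as HCS.
  pose proof (sinh_pos _ HD) as HS. pose proof (mink_H3_le p q p_H3 q_H3) as HC.
  set (C := cosh (dH p q)) in *. set (S := sinh (dH p q)) in *.
  set (z := lincomb C q (-1) p).
  assert (Hzz : mink z z = S * S).
  { unfold z. rewrite mink_lincomb_sq, (proj1 p_H3), (proj1 q_H3), (mink_sym q p). nra. }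
  assert (Hpz : mink p z = 1 - C * C).
  { unfold z. rewrite mink_lincomb_r, (proj1 p_H3). nra. }
  assert (Hqz : mink q z = 0).
  { unfold z. rewrite mink_lincomb_r, (proj1 q_H3), (mink_sym q p). nra. }
  pose proof (height_along_normal z ltac:(nra) ltac:(lra) ltac:(nra)) as H.
  rewrite Hzz, sqrt_square in H by lra.
  unfold z in H. rewrite mink_lincomb_r in H.
  assert (Hxz : C * mink x q + -1 * mink x p = - al * S * S).
  { replace (mink x q) with (- (al * C + be)) by lra.
    replace (mink x p) with (- (al + be * C)) by lra.
    rewrite Rmult_assoc, <- HCS. ring. }
  apply (Rmult_le_reg_r S); auto. lra.
Qed.

Lemma close_to_point : 0 <= B <= 1 -> dH p q = 0 -> dH x p <= 3 * B.
Proof.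
  intros HB HD.
  pose proof (dH_zero_pairing p q p_H3 q_H3 HD x) as Hpq.
  pose proof (projection_onto_span (- mink x p) 0) as H.
  rewrite HD, cosh_0 in H. rewrite (mink_sym p x), (mink_sym q x) in Hpq.
  unfold dH. apply arcosh_small; [apply mink_H3_le; auto | nra | lra].
Qed.

End HalfSpaceCriterion.

(* In the
   coordinates -<x,p> = al + be cosh D, -<x,q> = al cosh D + be, the function
   cosh d(x, c t) = al cosh t + be cosh (D - t) is minimised under the
   projection bound and the two overshoot bounds. *)
Lemma close_to_segment p q x c B : inH3 p -> inH3 q -> inH3 x -> geodesic_segment p q c ->
  0 <= B <= 1 ->
  (forall w, mink w w = 1 -> mink p w <= 0 -> mink q w <= 0 -> mink x w <= B) ->
  exists t, 0 <= t <= dH p q /\ dH x (c t) <= 3 * B.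
Proof.
  intros Hp Hq Hx Hgeo HB Hbelow.
  pose proof Hgeo as [Hc [Hc0 _]].
  destruct (Rle_lt_or_eq_dec 0 (dH p q) (dH_nonneg p q Hp Hq)) as [HD|HD].
  2: { exists 0. split; [lra|]. rewrite Hc0. apply (close_to_point p q); auto. }
  pose proof (cosh_sq_sub (dH p q)) as HCS. pose proof (sinh_pos _ HD) as HS.
  set (C := cosh (dH p q)) in *. set (S := sinh (dH p q)) in *.
  set (al := (C * - mink x q + mink x p) / (S*S)).
  set (be := (C * - mink x p + mink x q) / (S*S)).
  assert (HC2 : C * C - 1 <> 0) by nra.
  assert (Hxp : - mink x p = al + be * C) by (unfold al, be; rewrite <- HCS; field; exact HC2).
  assert (Hxq : - mink x q = al * C + be) by (unfold al, be; rewrite <- HCS; field; exact HC2).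
  assert (Hbelow' : forall w, mink w w = 1 -> mink q w <= 0 -> mink p w <= 0 -> mink x w <= B)
    by auto.
  pose proof (projection_onto_span p q x B Hp Hq Hx Hbelow al be Hxp Hxq) as Hpi.
  pose proof (endpoint_overshoot p q x B Hp Hq Hbelow al be HD Hxp Hxq) as Hal.
  pose proof (endpoint_overshoot q p x B Hq Hp Hbelow' be al) as Hbe.
  rewrite (dH_sym q p) in Hbe. fold C S in Hbe.
  specialize (Hbe ltac:(lra) ltac:(lra) ltac:(lra)).
  pose proof (mink_H3_le x p Hx Hp) as HA.
  fold C in Hpi. fold S in Hal.
  destruct (cosh_combination_min al be (dH p q) B ltac:(lra) ltac:(lra)
    ltac:(fold C; lra) ltac:(fold C; lra) ltac:(fold S; lra) ltac:(fold S; lra))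
    as [t [Ht HK]].
  exists t. split; auto.
  assert (Hct : inH3 (c t)) by (apply Hc; auto).
  pose proof (pairing_on_segment p q c x al be t Hp Hq Hgeo HD Ht Hxp Hxq) as Hpair.
  unfold dH at 1. apply arcosh_small; [apply mink_H3_le; auto | rewrite Hpair; exact HK | lra].
Qed.

(* Numerics: for delta < 10^-7, the bound 3 * 32 sqrt delta beats 5 delta^(1/5),
   since with r = delta^(1/5) we have sqrt delta <= r^2 and r < 5/96. *)
Lemma sqrt_below_fifth_root d : 0 < d < 1/10^7 -> 96 * sqrt d < 5 * Rpower d (1/5).
Proof.
  intros Hd. set (r := Rpower d (1/5)).
  assert (Hr0 : 0 < r) by (unfold r, Rpower; apply exp_pos).
  assert (Hr5 : r^5 = d).
  { rewrite <- Rpower_pow by auto. unfold r. rewrite Rpower_mult.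
    replace (1/5 * INR 5) with 1 by (simpl; field). apply Rpower_1. lra. }
  assert (Hr1 : r <= 1).
  { destruct (Rle_dec r 1) as [H|H]; auto.
    assert (1^5 <= r^5) by (apply pow_incr; lra). simpl in *. lra. }
  assert (Hr2 : r < 5/96).
  { destruct (Rlt_dec r (5/96)) as [H|H]; auto.
    assert ((5/96)^5 <= r^5) by (apply pow_incr; lra). simpl in *. lra. }
  assert (Hsd : sqrt d * sqrt d = d) by (apply sqrt_sqrt; lra).
  assert (Hsd0 : 0 <= sqrt d) by apply sqrt_pos.
  assert (sqrt d <= r * r).
  { apply sq_le; [nra|]. rewrite Hsd, <- Hr5. simpl.
    assert (r*(r*(r*(r*r))) <= r*(r*(r*(r*1)))) by (repeat (apply Rmult_le_compat_l; [lra|]); lra).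
    nra. }
  nra.
Qed.

Theorem mainTheorem14 :
  exists delta0 : R, 0 < delta0 /\
    forall delta : R, 0 < delta < delta0 ->
    forall (n : nat) (gamma : R -> R4) (c : R -> R4),
      quasigeodesic delta (INR n) gamma ->
      geodesic_segment (gamma 0) (gamma (INR n)) c ->
      forall s, 0 <= s <= INR n ->
        exists t, 0 <= t <= dH (gamma 0) (gamma (INR n)) /\
          dH (gamma s) (c t) < 5 * Rpower delta (1/5).
Proof.
  exists (1/10^7). split; [lra|].
  intros delta Hd n gamma c Hq Hgeo s Hs.
  pose proof (pos_INR n) as Hn. pose proof Hq as [Hpt _].
  assert (Hsd : sqrt delta * sqrt delta = delta) by (apply sqrt_sqrt; lra).
  assert (Hsd1 : 0 <= sqrt delta <= 1/64) by (pose proof (sqrt_pos delta); nra).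
  destruct (close_to_segment (gamma 0) (gamma (INR n)) (gamma s) c (32 * sqrt delta))
    as [t [Ht Hclose]]; try (apply Hpt; lra); auto; try lra.
  { intros w Hw H0 Hn0. apply (quasigeodesic_height_bound delta (INR n) gamma w); auto; lra. }
  exists t. split; auto.
  pose proof (sqrt_below_fifth_root delta Hd). lra.
Qed.
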